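(* Let $\mathbb{F}\in\{\mathbb{R},\mathbb{C}\}$, $A\in\mathbb{F}^{m\times n}$ with $\|A\|_{\infty,col}\le1$, $\mu>0$, $x_0\in\mathbb{F}^n$ with $S=\mathrm{supp}\,x_0$ and $\#S=K$, $\epsilon\in\mathbb{F}^m$, $b=Ax_0+\epsilon$, and let $N\ge1$ with $\beta_N>0$ and $\beta_K>0$. Let $x'=x_S$ be the oracle solution and $z'=(I-A^*A)x'+A^*b$. If $\|\epsilon\|_2<\beta_N^2\sqrt{\mu}$ and $$|x_{0,j}|>\frac{\sqrt{\mu}}{\beta_N^2}+\frac{\beta_N^2\sqrt{\mu}}{\beta_K}\quad\text{for all }j\in S,$$ then $|z'_i|\notin\big[\beta_N^2\sqrt{\mu},\ \sqrt{\mu}/\beta_N^2\big]$ for all $1\le i\le n$.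
   Context: $\|A\|_{\infty,col}=\max_i\|a_i\|_2$ over the columns $a_i$ of $A$. $\mathrm{card}(x)$ is the number of nonzero entries; $\beta_k=\inf\{\|Ax\|_2/\|x\|_2:x\ne0,\ \mathrm{card}(x)\le k\}$. $A_S$ denotes $A$ with all columns with index outside $S$ set to zero, and the oracle solution is $x_S=(A_S^*A_S)^\dagger A_S^*b$, where $\dagger$ is the Moore–Penrose inverse and $A^*$ the conjugate transpose. *)

From HB Require Import structures.
From mathcomp Require Import all_boot all_order all_algebra.
From mathcomp Require Import classical_sets reals.
From mathcomp Require Import complex.
Set Implicit Arguments. Unset Strict Implicit. Unset Printing Implicit Defensive.
Import Order.TTheory GRing.Theory Num.Theory.
Local Open Scope ring_scope.

Section Defs.
(* R : the real numbers; F : the scalar field (R or C);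
   cj : scalar conjugation on F; md : modulus F -> R. *)
Variables (R : realType) (F : pzRingType) (cj : F -> F) (md : F -> R).

Definition adj {m n : nat} (A : 'M[F]_(m, n)) : 'M[F]_(n, m) := map_mx cj A^T.

Definition norm2 {m : nat} (x : 'cV[F]_m) : R :=
  Num.sqrt (\sum_(i < m) md (x i 0) ^+ 2).

Definition norm_inf_col {m n : nat} (A : 'M[F]_(m, n)) : R :=
  \big[Num.max/0]_(j < n) norm2 (col j A).

Definition supp {n : nat} (x : 'cV[F]_n) : {set 'I_n} := [set i | x i 0 != 0].
Definition card {n : nat} (x : 'cV[F]_n) : nat := #|supp x|.

Definition beta {m n : nat} (A : 'M[F]_(m, n)) (k : nat) : R :=
  inf [set norm2 (A *m x) / norm2 x | x in [set x : 'cV[F]_n | x != 0 /\ (card x <= k)%N]]%classic.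

Definition restr_cols {m n : nat} (A : 'M[F]_(m, n)) (S : {set 'I_n}) : 'M[F]_(m, n) :=
  \matrix_(i, j) (if j \in S then A i j else 0).

Definition is_MP_inverse {m n : nat} (M : 'M[F]_(m, n)) (X : 'M[F]_(n, m)) : Prop :=
  [/\ M *m X *m M = M, X *m M *m X = X,
      adj (M *m X) = M *m X & adj (X *m M) = X *m M].

End Defs.

Definition Cnorm (R : realType) (z : complex.complex R) : R := complex.ComplexField.Normc.normc z.

From HB Require Import structures.
From mathcomp Require Import all_boot all_order all_algebra.
From mathcomp Require Import classical_sets reals.
From mathcomp Require Import complex.
From mathcomp Require Import lra.
Set Implicit Arguments. Unset Strict Implicit. Unset Printing Implicit Defensive.
Import Order.TTheory GRing.Theory Num.Theory.
Local Open Scope ring_scope.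

(* The oracle solution x' is supported on S and A x' = A x0 + P eps, where
   P = A_S (A_S^* A_S)^+ A_S^* is the orthogonal projection onto the range of A_S.
   So the residual r = b - A x' = (I - P) eps is orthogonal to the columns of A_S,
   and both P eps and r have norm at most |eps|.  As z' = x' + A^* r:
   - off S, z'_i = <a_i, r>, so |z'_i| <= |a_i| |r| <= |eps| < beta_N^2 sqrt mu;
   - on S, (A^* r)_i = 0, so z'_i - x0_i = (x' - x0)_i, a vector supported on S,
     whence beta_K |z'_i - x0_i| <= |A (x' - x0)| = |P eps| <= |eps|, and the
     lower bound on |x0_i| forces |z'_i| > sqrt mu / beta_N^2. *)

Lemma sum_mul_le_sqrt (R : rcfType) p (x y : 'I_p -> R) :
  \sum_k x k * y k <= Num.sqrt (\sum_k x k ^+ 2) * Num.sqrt (\sum_k y k ^+ 2).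
Proof.
have sx : 0 <= \sum_k x k ^+ 2 by apply: sumr_ge0 => k _; exact: sqr_ge0.
have sy : 0 <= \sum_k y k ^+ 2 by apply: sumr_ge0 => k _; exact: sqr_ge0.
have sq : (\sum_k x k * y k) ^+ 2 <= (\sum_k x k ^+ 2) * \sum_k y k ^+ 2.
  have e1 : (\sum_k x k * y k) ^+ 2 = \sum_i \sum_j x i * y i * (x j * y j).
    by rewrite expr2 mulr_suml; apply: eq_bigr => i _; rewrite mulr_sumr.
  have e2 : (\sum_k x k ^+ 2) * \sum_k y k ^+ 2 = \sum_i \sum_j x i ^+ 2 * y j ^+ 2.
    by rewrite mulr_suml; apply: eq_bigr => i _; rewrite mulr_sumr.
  have e3 : (\sum_k x k ^+ 2) * \sum_k y k ^+ 2 = \sum_i \sum_j x j ^+ 2 * y i ^+ 2.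
    rewrite mulrC mulr_suml; apply: eq_bigr => i _; rewrite mulr_sumr.
    by apply: eq_bigr => j _; rewrite mulrC.
  rewrite -(ler_pM2l (_ : 0 < 2)) // [X in _ <= X]mulr_natl [X in _ <= X]mulr2n.
  rewrite {1}e2 e3 e1 -big_split mulr_sumr; apply: ler_sum => i _.
  rewrite mulr_sumr -big_split /=.
  apply: ler_sum => j _; have := sqr_ge0 (x i * y j - x j * y i); nra.
rewrite -sqrtrM //; apply: le_trans (ler_norm _) _.
by rewrite -sqrtr_sqr ler_sqrt // mulr_ge0.
Qed.

(* Real and complex scalars are treated together: the only structure used is an
   involutive conjugation [cj], a subadditive absolute value [md] and an embedding
   [emb] of the reals with [emb (md a ^+ 2) = cj a * a]. *)
Section ConjugateAbsolute.
Variables (R : realType) (F : idomainType) (cj : {rmorphism F -> F}) (md : F -> R).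
Variable emb : {rmorphism R -> F}.
Hypothesis cjK : involutive cj.
Hypothesis md_ge0 : forall a, 0 <= md a.
Hypothesis ler_mdD : forall a b, md (a + b) <= md a + md b.
Hypothesis emb_md_sqr : forall a, emb (md a ^+ 2) = cj a * a.

Lemma md_eq_sqr a b : cj a * a = cj b * b -> md a = md b.
Proof. by rewrite -!emb_md_sqr => /fmorph_inj/eqP; rewrite eqrXn2 // => /eqP. Qed.

Lemma md0 : md 0 = 0.
Proof.
have : emb (md 0 ^+ 2) = emb 0 by rewrite emb_md_sqr mulr0 rmorph0.
by move/fmorph_inj/eqP; rewrite sqrf_eq0 => /eqP.
Qed.

Lemma md_eq0 a : (md a == 0) = (a == 0).
Proof.
apply/idP/idP => [/eqP a0|/eqP->]; last by rewrite md0.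
have : cj a * a == 0 by rewrite -(emb_md_sqr a) a0 expr2 mulr0 rmorph0.
rewrite mulf_eq0 => /orP[|//].
by rewrite -{2}[a]cjK => /eqP->; rewrite rmorph0.
Qed.

Lemma mdN a : md (- a) = md a.
Proof. by apply: md_eq_sqr; rewrite rmorphN mulrNN. Qed.

Lemma md_cj a : md (cj a) = md a.
Proof. by apply: md_eq_sqr; rewrite cjK mulrC. Qed.

Lemma mdM a b : md (a * b) = md a * md b.
Proof.
have : emb (md (a * b) ^+ 2) = emb ((md a * md b) ^+ 2).
  by rewrite exprMn [RHS]rmorphM !emb_md_sqr rmorphM mulrACA.
by move/fmorph_inj/eqP; rewrite eqrXn2 ?mulr_ge0 // => /eqP.
Qed.

Lemma md_sum (I : Type) (r : seq I) (P : pred I) (f : I -> F) :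
  md (\sum_(i <- r | P i) f i) <= \sum_(i <- r | P i) md (f i).
Proof.
elim/big_rec2: _ => [|i y1 y2 _ h]; first by rewrite md0.
exact: le_trans (ler_mdD _ _) (lerD (lexx _) h).
Qed.

Local Notation adj := (adj cj).

Lemma adjM m n p (A : 'M[F]_(m, n)) (B : 'M[F]_(n, p)) :
  adj (A *m B) = adj B *m adj A.
Proof. by rewrite /adj trmx_mul map_mxM. Qed.

Lemma adjK m n (A : 'M[F]_(m, n)) : adj (adj A) = A.
Proof. by apply/matrixP => i j; rewrite !mxE cjK. Qed.

Lemma adjD m n (A B : 'M[F]_(m, n)) : adj (A + B) = adj A + adj B.
Proof. by apply/matrixP => i j; rewrite !mxE rmorphD. Qed.

Lemma adjB m n (A B : 'M[F]_(m, n)) : adj (A - B) = adj A - adj B.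
Proof. by apply/matrixP => i j; rewrite !mxE rmorphB. Qed.

Lemma adj0 m n : adj (0 : 'M[F]_(m, n)) = 0.
Proof. by apply/matrixP => i j; rewrite !mxE rmorph0. Qed.

Definition sqnorm p (w : 'cV[F]_p) : R := \sum_i md (w i 0) ^+ 2.

Lemma norm2E p (w : 'cV[F]_p) : norm2 md w = Num.sqrt (sqnorm w).
Proof. by []. Qed.

Lemma sqnorm_ge0 p (w : 'cV[F]_p) : 0 <= sqnorm w.
Proof. by apply: sumr_ge0 => i _; exact: sqr_ge0. Qed.

Lemma norm2_ge0 p (w : 'cV[F]_p) : 0 <= norm2 md w.
Proof. exact: sqrtr_ge0. Qed.

Lemma emb_sqnorm p (w : 'cV[F]_p) : emb (sqnorm w) = (adj w *m w) 0 0.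
Proof. by rewrite rmorph_sum mxE; apply: eq_bigr => k _; rewrite emb_md_sqr !mxE. Qed.

Lemma sqnorm_eq0 p (w : 'cV[F]_p) : sqnorm w = 0 -> w = 0.
Proof.
move/psumr_eq0P => w0; apply/matrixP => i j; rewrite (ord1 j) mxE.
by apply/eqP; rewrite -md_eq0 -sqrf_eq0 w0 // => k _; exact: sqr_ge0.
Qed.

Lemma adj_mul_self_eq0 p q (W : 'M[F]_(p, q)) : adj W *m W = 0 -> W = 0.
Proof.
move=> W0; apply/matrixP => k j.
have : sqnorm (col j W) = 0.
  apply: (fmorph_inj emb); rewrite emb_sqnorm rmorph0.
  have -> : (adj (col j W) *m col j W) 0 0 = (adj W *m W) j j.
    by rewrite !mxE; apply: eq_bigr => l _; rewrite !mxE.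
  by rewrite W0 mxE.
by move/sqnorm_eq0/matrixP/(_ k 0); rewrite !mxE.
Qed.

Lemma sqnormD_orth p (u v : 'cV[F]_p) :
  adj u *m v = 0 -> sqnorm (u + v) = sqnorm u + sqnorm v.
Proof.
move=> uv0; apply: (fmorph_inj emb); rewrite rmorphD !emb_sqnorm.
have vu0 : adj v *m u = 0 by rewrite -[u]adjK -adjM uv0 adj0.
by rewrite adjD mulmxDl !mulmxDr uv0 vu0 !mxE !add0r addr0.
Qed.

Lemma md_le_norm2 p (v : 'cV[F]_p) i : md (v i 0) <= norm2 md v.
Proof.
rewrite norm2E -(ger0_norm (md_ge0 _)) -sqrtr_sqr ler_sqrt ?sqnorm_ge0 //.
by rewrite /sqnorm (bigD1 i) //= lerDl; apply: sumr_ge0 => l _; exact: sqr_ge0.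
Qed.

Lemma md_adj_mul_le p (u v : 'cV[F]_p) :
  md ((adj u *m v) 0 0) <= norm2 md u * norm2 md v.
Proof.
rewrite mxE; apply: le_trans (md_sum _ _ _) _.
under eq_bigr do rewrite !mxE mdM md_cj.
exact: sum_mul_le_sqrt.
Qed.

Lemma norm2_col_le m n (A : 'M[F]_(m, n)) i : norm2 md (col i A) <= norm_inf_col md A.
Proof. exact: le_bigmax. Qed.

Lemma beta_mul_norm2_le m n (A : 'M[F]_(m, n)) k (v : 'cV[F]_n) :
  0 <= beta md A k -> (#|supp v| <= k)%N -> beta md A k * norm2 md v <= norm2 md (A *m v).
Proof.
move=> beta_ge0 vk; have [->|v0] := eqVneq v 0.
  rewrite norm2E /sqnorm big1 ?sqrtr0 ?mulr0 ?norm2_ge0 // => i _.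
  by rewrite mxE md0 expr2 mulr0.
have v_gt0 : 0 < norm2 md v.
  rewrite lt_def norm2_ge0 andbT; apply: contra v0; rewrite norm2E sqrtr_eq0 => v_le0.
  by apply/eqP/sqnorm_eq0/eqP; rewrite eq_le v_le0 sqnorm_ge0.
rewrite -ler_pdivlMr //; apply: ge_inf; last by exists v.
by exists 0 => _ [w _ <-]; rewrite divr_ge0 ?norm2_ge0.
Qed.

Lemma supp_notin n (v : 'cV[F]_n) (S : {set 'I_n}) i :
  supp v \subset S -> i \notin S -> v i 0 = 0.
Proof.
move=> /fintype.subsetP vS iS; apply/eqP; apply: contraNT iS => vi0.
by apply: vS; rewrite inE.
Qed.

Lemma mulmx_restr_cols m n (A : 'M[F]_(m, n)) (S : {set 'I_n}) (v : 'cV[F]_n) :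
  supp v \subset S -> A *m v = restr_cols A S *m v.
Proof.
move=> vS; apply/matrixP => k j; rewrite (ord1 j) !mxE; apply: eq_bigr => l _.
by rewrite mxE; case: ifP => // /negbT lS; rewrite (supp_notin vS lS) !mulr0.
Qed.

Lemma adj_restr_cols_mulE m n p (A : 'M[F]_(m, n)) (S : {set 'I_n}) (w : 'M[F]_(m, p)) i j :
  (adj (restr_cols A S) *m w) i j = if i \in S then (adj A *m w) i j else 0.
Proof.
rewrite !mxE; case: ifP => iS; first by apply: eq_bigr => l _; rewrite !mxE iS.
by apply: big1 => l _; rewrite !mxE iS rmorph0 mul0r.
Qed.

Lemma supp_adj_restr_cols_mul m n (A : 'M[F]_(m, n)) (S : {set 'I_n}) (w : 'cV[F]_m) :
  supp (adj (restr_cols A S) *m w) \subset S.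
Proof.
by apply/fintype.subsetP => i; rewrite inE adj_restr_cols_mulE; case: ifP; rewrite ?eqxx.
Qed.

Lemma gradient_stepE m n (A : 'M[F]_(m, n)) (x : 'cV[F]_n) (y : 'cV[F]_m) :
  (1%:M - adj A *m A) *m x + adj A *m y = x + adj A *m (y - A *m x).
Proof. by rewrite mulmxBl mul1mx mulmxBr mulmxA addrA addrAC. Qed.

Section MoorePenroseGram.
Variables (m n : nat) (B : 'M[F]_(m, n)) (X : 'M[F]_n).
Hypothesis hX : is_MP_inverse cj (adj B *m B) X.

Lemma gram_pinv_gram : adj B *m B *m X *m adj B *m B = adj B *m B.
Proof. by case: hX => MXM _ _ _; rewrite -mulmxA MXM. Qed.

Lemma gram_pinv_adj : adj B *m B *m X *m adj B = adj B.
Proof.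
case: hX => _ _ MX_adj _.
set Y := adj B - adj B *m B *m X *m adj B.
have adjY : adj Y = B - B *m (adj B *m B *m X) by rewrite /Y adjB adjM adjK MX_adj.
have : adj (adj Y) *m adj Y = 0.
  by rewrite adjK adjY /Y !mulmxBl !mulmxBr !mulmxA gram_pinv_gram subrr.
move/adj_mul_self_eq0 => Y0; apply/eqP; rewrite eq_sym -subr_eq0 -/Y.
by rewrite -[Y]adjK Y0 adj0.
Qed.

Lemma gram_pinv_mul : B *m X *m adj B *m B = B.
Proof.
case: hX => _ _ _ XM_adj.
set Z := B - B *m (X *m (adj B *m B)).
have adjZ : adj Z = adj B - X *m (adj B *m B) *m adj B by rewrite /Z adjB adjM XM_adj.
have : adj Z *m Z = 0.
  have MXM' : adj B *m (B *m (X *m (adj B *m B))) = adj B *m B.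
    by rewrite !mulmxA gram_pinv_gram.
  by rewrite adjZ /Z !mulmxBl !mulmxBr -!mulmxA MXM' !subrr.
move/adj_mul_self_eq0 => Z0; rewrite -!mulmxA; apply/eqP.
by rewrite eq_sym -subr_eq0 -/Z Z0.
Qed.

Lemma pinv_adj_factor : X *m adj B = adj B *m (B *m adj X *m X *m adj B).
Proof.
case: hX => _ _ _ XM_adj.
have XM : X *m adj B *m B = adj B *m B *m adj X.
  by rewrite -mulmxA -XM_adj !adjM adjK.
by rewrite -{1}gram_pinv_adj !mulmxA XM.
Qed.

End MoorePenroseGram.

Section OracleSolution.
Variables (m n : nat) (A : 'M[F]_(m, n)) (S : {set 'I_n}).
Variables (x0 : 'cV[F]_n) (eps : 'cV[F]_m) (X : 'M[F]_n).
Hypothesis x0S : supp x0 \subset S.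
Hypothesis hX : is_MP_inverse cj (adj (restr_cols A S) *m restr_cols A S) X.

Local Notation AS := (restr_cols A S).
Local Notation P := (AS *m X *m adj AS).
Local Notation b := (A *m x0 + eps).
Local Notation x' := (X *m adj AS *m b).
Local Notation r := (b - A *m x').
Local Notation z' := ((1%:M - adj A *m A) *m x' + adj A *m b).

Lemma supp_oracle : supp x' \subset S.
Proof. by rewrite (pinv_adj_factor hX) -(mulmxA (adj AS)) supp_adj_restr_cols_mul. Qed.

Lemma mul_oracle : A *m x' = A *m x0 + P *m eps.
Proof.
rewrite (mulmx_restr_cols _ supp_oracle) (mulmx_restr_cols _ x0S).
by rewrite !mulmxA mulmxDr !mulmxA (gram_pinv_mul hX).
Qed.

Lemma oracle_residualE : r = eps - P *m eps.
Proof. by rewrite mul_oracle opprD addrACA subrr add0r. Qed.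

Lemma oracle_error : A *m (x' - x0) = P *m eps.
Proof. by rewrite mulmxBr mul_oracle addrAC subrr add0r. Qed.

Lemma adj_restr_residual : adj AS *m r = 0.
Proof. by rewrite oracle_residualE mulmxBr !mulmxA (gram_pinv_adj hX) subrr. Qed.

Lemma sqnorm_noise_split : sqnorm eps = sqnorm (P *m eps) + sqnorm r.
Proof.
rewrite -sqnormD_orth; first by rewrite oracle_residualE addrC subrK.
have -> : adj (P *m eps) = adj eps *m AS *m adj X *m adj AS by rewrite !adjM adjK !mulmxA.
by rewrite -mulmxA adj_restr_residual mulmx0.
Qed.

Lemma norm2_proj_noise_le : norm2 md (P *m eps) <= norm2 md eps.
Proof. by rewrite !norm2E ler_sqrt ?sqnorm_ge0 // sqnorm_noise_split lerDl sqnorm_ge0. Qed.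

Lemma norm2_residual_le : norm2 md r <= norm2 md eps.
Proof. by rewrite !norm2E ler_sqrt ?sqnorm_ge0 // sqnorm_noise_split lerDr sqnorm_ge0. Qed.

Lemma md_oracle_step_notin i :
  norm_inf_col md A <= 1 -> i \notin S -> md (z' i 0) <= norm2 md eps.
Proof.
move=> A1 iS; rewrite gradient_stepE [(_ + _ : 'cV[F]_n) i 0]mxE.
rewrite (supp_notin supp_oracle iS) add0r.
have -> : (adj A *m r) i 0 = (adj (col i A) *m r) 0 0.
  by rewrite !mxE; apply: eq_bigr => l _; rewrite !mxE.
apply: le_trans (md_adj_mul_le _ _) _; rewrite -[norm2 md eps]mul1r.
by rewrite ler_pM ?norm2_ge0 ?norm2_residual_le // (le_trans (norm2_col_le _ _)).
Qed.

Lemma md_oracle_step_in i : 0 <= beta md A #|S| -> i \in S ->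
  md (z' i 0 - x0 i 0) * beta md A #|S| <= norm2 md eps.
Proof.
move=> beta_ge0 iS.
have ri : (adj A *m r) i 0 = 0.
  by move: (adj_restr_cols_mulE A S r i 0); rewrite iS adj_restr_residual => <-; rewrite mxE.
have -> : z' i 0 - x0 i 0 = (x' - x0) i 0.
  by rewrite gradient_stepE [(_ + _ : 'cV[F]_n) i 0]mxE ri addr0 [RHS]mxE [(- x0) i 0]mxE.
have dS : supp (x' - x0) \subset S.
  apply/fintype.subsetP => k; rewrite inE; apply: contraR => kS.
  by rewrite mxE [(- x0) k 0]mxE (supp_notin supp_oracle kS) (supp_notin x0S kS) subrr.
apply: (@le_trans _ _ (beta md A #|S| * norm2 md (x' - x0))).
  by rewrite mulrC ler_wpM2l ?md_le_norm2.
apply: le_trans (beta_mul_norm2_le beta_ge0 (subset_leq_card dS)) _.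
by rewrite oracle_error norm2_proj_noise_le.
Qed.

End OracleSolution.

Theorem oracle_step_gap m n (A : 'M[F]_(m, n)) (S : {set 'I_n}) x0 eps X (c t : R) :
  supp x0 \subset S -> norm_inf_col md A <= 1 -> 0 < beta md A #|S| ->
  is_MP_inverse cj (adj (restr_cols A S) *m restr_cols A S) X ->
  norm2 md eps < c -> (forall j, j \in S -> t + c / beta md A #|S| < md (x0 j 0)) ->
  let b := A *m x0 + eps in
  let x' := X *m adj (restr_cols A S) *m b in
  let z' := (1%:M - adj A *m A) *m x' + adj A *m b in
  forall i, ~ (c <= md (z' i 0) <= t).
Proof.
move=> x0S A1 beta_gt0 hX eps_lt x0_gt b x' z' i /andP[c_le le_t].
have [iS|iS] := boolP (i \in S); last first.
  by have := md_oracle_step_notin eps x0S hX A1 iS; lra.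
have err := md_oracle_step_in eps x0S hX (ltW beta_gt0) iS.
have err_lt : md (z' i 0 - x0 i 0) < c / beta md A #|S|.
  by rewrite ltr_pdivlMr //; exact: le_lt_trans err eps_lt.
have := ler_mdD (z' i 0) (- (z' i 0 - x0 i 0)); rewrite mdN opprB subrKC.
have := x0_gt i iS; lra.
Qed.

End ConjugateAbsolute.

Theorem proposition4p7 (R : realType) :
  (* case F = R *)
  (forall (m n : nat) (A : 'M[R]_(m, n)) (mu : R) (x0 : 'cV[R]_n)
          (eps : 'cV[R]_m) (N : nat) (X : 'M[R]_n),
    let cj := (fun a : R => a) in
    let md := (fun a : R => `|a|) in
    let S := supp x0 in
    let K := #|S| in
    let b := A *m x0 + eps in
    let AS := restr_cols A S in
    let bN := beta md A N in
    norm_inf_col md A <= 1 -> 0 < mu -> (1 <= N)%N ->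
    0 < bN -> 0 < beta md A K ->
    is_MP_inverse cj (adj cj AS *m AS) X ->
    let x' := X *m adj cj AS *m b in
    let z' := (1%:M - adj cj A *m A) *m x' + adj cj A *m b in
    norm2 md eps < bN ^+ 2 * Num.sqrt mu ->
    (forall j, j \in S ->
       Num.sqrt mu / bN ^+ 2 + bN ^+ 2 * Num.sqrt mu / beta md A K < md (x0 j 0)) ->
    forall i : 'I_n,
      ~ (bN ^+ 2 * Num.sqrt mu <= md (z' i 0) <= Num.sqrt mu / bN ^+ 2))
  /\
  (* case F = C *)
  (forall (m n : nat) (A : 'M[complex.complex R]_(m, n)) (mu : R)
          (x0 : 'cV[complex.complex R]_n) (eps : 'cV[complex.complex R]_m)
          (N : nat) (X : 'M[complex.complex R]_n),
    let cj := @complex.conjc R in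
    let md := @Cnorm R in
    let S := supp x0 in
    let K := #|S| in
    let b := A *m x0 + eps in
    let AS := restr_cols A S in
    let bN := beta md A N in
    norm_inf_col md A <= 1 -> 0 < mu -> (1 <= N)%N ->
    0 < bN -> 0 < beta md A K ->
    is_MP_inverse cj (adj cj AS *m AS) X ->
    let x' := X *m adj cj AS *m b in
    let z' := (1%:M - adj cj A *m A) *m x' + adj cj A *m b in
    norm2 md eps < bN ^+ 2 * Num.sqrt mu ->
    (forall j, j \in S ->
       Num.sqrt mu / bN ^+ 2 + bN ^+ 2 * Num.sqrt mu / beta md A K < md (x0 j 0)) ->
    forall i : 'I_n,
      ~ (bN ^+ 2 * Num.sqrt mu <= md (z' i 0) <= Num.sqrt mu / bN ^+ 2)).
Proof.
split=> m n A mu x0 eps N X cj md S K b AS bN A1 _ _ _ beta_gt0 hX x' z' eps_lt x0_gt.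
- have md_sqr (a : R) : idfun (md a ^+ 2) = idfun a * a := real_normK (num_real a).
  exact: (oracle_step_gap (cj := idfun) (emb := idfun) (fun _ => erefl) (@normr_ge0 _ _)
    (@ler_normD _ _) md_sqr (subxx _) A1 beta_gt0 hX eps_lt x0_gt).
- have md_ge0 (a : R[i]) : 0 <= md a by case: a => ? ?; exact: sqrtr_ge0.
  have md_sqr (a : R[i]) : real_complex R (md a ^+ 2) = cj a * a.
    by rewrite rmorphXn; change (`|a| ^+ 2 = cj a * a); rewrite sqr_normc mulrC.
  exact: (oracle_step_gap (@conjcK R) md_ge0 (@le_normcD R) md_sqr
    (subxx _) A1 beta_gt0 hX eps_lt x0_gt).
Qed.
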